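(* Let $n,k$ be integers with $1\le k<n/2$ and let $\gamma\in\mathrm{Aut}(\mathrm{DGP}(n,k))$. If $\gamma$ stabilizes any of $\mathcal{O},\mathcal{I},\mathcal{S}$ setwise, then it stabilizes $\mathcal{S}$ setwise. Moreover, if $\gamma$ stabilizes $\mathcal{S}$ setwise and either $n$ is odd or $k$ is even, then either $\gamma$ stabilizes each of $\mathcal{O}$ and $\mathcal{I}$ setwise, or $\gamma$ interchanges $\mathcal{O}$ and $\mathcal{I}$.
   Context: $\mathrm{GP}(n,k)$ ($1\le k<n/2$) has vertices $u_0,\dots,u_{n-1},v_0,\dots,v_{n-1}$ and edges $\{u_i,u_{i+1}\},\{u_i,v_i\},\{v_i,v_{i+k}\}$ (subscripts mod $n$). $\mathrm{DGP}(n,k)$ is its canonical double cover: vertex set $\{(u_i,j),(v_i,j): 0\le i\le n-1,\ j\in\{0,1\}\}$ and edges $\{(u_i,j),(u_{i+1},1-j)\}$, $\{(u_i,j),(v_i,1-j)\}$, $\{(v_i,j),(v_{i+k},1-j)\}$ for all $i$ (mod $n$) and $j\in\{0,1\}$. Let $\mathcal{O}=\{\{(u_i,j),(u_{i+1},1-j)\}\}$ (outer edges), $\mathcal{I}=\{\{(v_i,j),(v_{i+k},1-j)\}\}$ (inner edges), $\mathcal{S}=\{\{(u_i,j),(v_i,1-j)\}\}$ (spokes), over all $i\in\{0,\dots,n-1\}$, $j\in\{0,1\}$. *)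

From mathcomp Require Import all_boot all_fingroup.
Unset Printing Implicit Defensive.

(* Vertices of DGP(n,k): (inl i, j) is (u_i, j), (inr i, j) is (v_i, j),
   with i : 'I_n (indices mod n) and layer j : bool (false = 0, true = 1). *)
Definition dgp_vertex (n : nat) : finType := (('I_n + 'I_n) * bool)%type.

(* Edge sets as symmetric boolean relations: x ~ y iff {x,y} is an edge. *)

Definition outer_edge (n : nat) : rel (dgp_vertex n) := fun x y =>
  match x, y with
  | (inl i, j), (inl i', j') =>
      (j' == ~~ j) && (((i + 1) %% n == i') || ((i' + 1) %% n == i))
  | _, _ => false
  end.

Definition inner_edge (n k : nat) : rel (dgp_vertex n) := fun x y =>
  match x, y with
  | (inr i, j), (inr i', j') =>
      (j' == ~~ j) && (((i + k) %% n == i') || ((i' + k) %% n == i))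
  | _, _ => false
  end.

Definition spoke_edge (n : nat) : rel (dgp_vertex n) := fun x y =>
  match x, y with
  | (inl i, j), (inr i', j') => (i == i') && (j' == ~~ j)
  | (inr i, j), (inl i', j') => (i == i') && (j' == ~~ j)
  | _, _ => false
  end.

Definition dgp_adj (n k : nat) : rel (dgp_vertex n) := fun x y =>
  [|| outer_edge n x y, inner_edge n k x y | spoke_edge n x y].

Definition is_dgp_aut (n k : nat) (g : {perm dgp_vertex n}) : Prop :=
  forall x y, dgp_adj n k (g x) (g y) = dgp_adj n k x y.

Definition stabilizes (n : nat) (g : {perm dgp_vertex n}) (E : rel (dgp_vertex n)) : Prop :=
  forall x y, E (g x) (g y) = E x y.

Definition interchanges (n : nat) (g : {perm dgp_vertex n}) (E1 E2 : rel (dgp_vertex n)) : Prop :=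
  (forall x y, E2 (g x) (g y) = E1 x y) /\ (forall x y, E1 (g x) (g y) = E2 x y).

From mathcomp Require Import all_boot all_fingroup zmodp.

Set Implicit Arguments.
Unset Strict Implicit.

(* Outer edges join two u-vertices, inner edges two v-vertices and spokes a
   u-vertex to a v-vertex, and every vertex lies on an outer or an inner edge.
   Hence an automorphism stabilizing O or I preserves the side (u or v) of each
   vertex, and so stabilizes S, the edges between the two sides.  Conversely,
   if S is stabilized then so is O ∪ I, the complementary edges, and whether
   the side of x is preserved by gamma is invariant along every edge: spokes
   change the side of both x and gamma x, the edges of O ∪ I change neither.
   DGP(n,k) is connected as soon as GP(n,k) has an odd cycle: the outer n-cycle
   when n is odd, or u_0 ... u_k v_k v_0 u_0, of length k + 3, when k is even.
   So gamma either preserves every side, and then fixes O and I, or swaps every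
   side, and then interchanges them. *)

Section StabilizedDomain.

Variables (T : finType) (g : {perm T}) (E : rel T) (P : pred T).

Hypotheses (edge_dom : forall x y, E x y -> P x)
           (dom_edge : forall x, P x -> exists y, E x y).

Lemma stabilized_domain :
  (forall x y, E (g x) (g y) = E x y) -> forall x, P (g x) = P x.
Proof.
move=> gE x; apply/idP/idP => Px.
- have [z Ez] := dom_edge Px.
  by apply: (edge_dom (y := (g^-1 z)%g)); rewrite -gE permKV.
- have [y Exy] := dom_edge Px.
  by apply: (edge_dom (y := g y)); rewrite gE.
Qed.

End StabilizedDomain.

Section DoubleGeneralizedPetersen.

Variables n k : nat.

Definition is_uvertex (x : dgp_vertex n) : bool := if x.1 is inl _ then true else false.

Definition cycle_edge : rel (dgp_vertex n) :=
  fun x y => outer_edge n x y || inner_edge n k x y.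

Lemma outer_edge_uvertex x y : outer_edge n x y -> is_uvertex x.
Proof. by case: x y => [[?|?] ?] [[?|?] ?]. Qed.

Lemma inner_edge_vvertex x y : inner_edge n k x y -> ~~ is_uvertex x.
Proof. by case: x y => [[?|?] ?] [[?|?] ?]. Qed.

Lemma spoke_edge_uvertex x y : spoke_edge n x y -> is_uvertex y = ~~ is_uvertex x.
Proof. by case: x y => [[?|?] ?] [[?|?] ?]. Qed.

Lemma cycle_edge_uvertex x y : cycle_edge x y -> is_uvertex y = is_uvertex x.
Proof. by case: x y => [[?|?] ?] [[?|?] ?]. Qed.

Lemma spoke_edgeE x y :
  spoke_edge n x y = dgp_adj n k x y && (is_uvertex x != is_uvertex y).
Proof.
by case: x y => [[?|?] ?] [[?|?] ?]; rewrite /dgp_adj /= ?(orbF, andbT, andbF, andbN).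
Qed.

Lemma cycle_edgeE x y : cycle_edge x y = dgp_adj n k x y && ~~ spoke_edge n x y.
Proof.
by case: x y => [[?|?] ?] [[?|?] ?];
  rewrite /cycle_edge /dgp_adj /= ?(orbF, andbT, andbF, andbN).
Qed.

Lemma outer_edgeE x y : outer_edge n x y = cycle_edge x y && is_uvertex x.
Proof.
by case: x y => [[?|?] ?] [[?|?] ?]; rewrite /cycle_edge /= ?(orbF, andbT, andbF).
Qed.

Lemma inner_edgeE x y : inner_edge n k x y = cycle_edge x y && ~~ is_uvertex x.
Proof.
by case: x y => [[?|?] ?] [[?|?] ?]; rewrite /cycle_edge /= ?(orbF, andbT, andbF).
Qed.

Variable g : {perm dgp_vertex n}.
Hypothesis g_aut : is_dgp_aut n k g.

Lemma stabilizes_spoke_of_uvertex :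
  (forall x, is_uvertex (g x) = is_uvertex x) -> stabilizes n g (spoke_edge n).
Proof. by move=> gU x y; rewrite !spoke_edgeE g_aut !gU. Qed.

Hypothesis g_spoke : stabilizes n g (spoke_edge n).

Lemma stabilizes_cycle_edge x y : cycle_edge (g x) (g y) = cycle_edge x y.
Proof. by rewrite !cycle_edgeE g_aut g_spoke. Qed.

Lemma uvertex_preserved_adj x y : dgp_adj n k x y ->
  (is_uvertex (g x) == is_uvertex x) = (is_uvertex (g y) == is_uvertex y).
Proof.
move=> xy; case Sxy: (spoke_edge n x y).
  have gxy : spoke_edge n (g x) (g y) by rewrite g_spoke.
  rewrite (spoke_edge_uvertex gxy) (spoke_edge_uvertex Sxy).
  by case: (is_uvertex x); case: (is_uvertex (g x)).
have Cxy : cycle_edge x y by rewrite cycle_edgeE xy Sxy.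
have gxy : cycle_edge (g x) (g y) by rewrite stabilizes_cycle_edge.
by rewrite (cycle_edge_uvertex gxy) (cycle_edge_uvertex Cxy).
Qed.

Lemma stabilizes_outer_inner_of_uvertex :
  (forall x, is_uvertex (g x) = is_uvertex x) ->
  stabilizes n g (outer_edge n) /\ stabilizes n g (inner_edge n k).
Proof.
by move=> gU; split=> x y; rewrite [LHS]outer_edgeE + rewrite [LHS]inner_edgeE;
  rewrite stabilizes_cycle_edge gU -?outer_edgeE -?inner_edgeE.
Qed.

Lemma interchanges_outer_inner_of_uvertex :
  (forall x, is_uvertex (g x) = ~~ is_uvertex x) ->
  interchanges n g (outer_edge n) (inner_edge n k).
Proof.
move=> gU; split=> x y.
  by rewrite inner_edgeE stabilizes_cycle_edge gU negbK -outer_edgeE.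
by rewrite outer_edgeE stabilizes_cycle_edge gU -inner_edgeE.
Qed.

End DoubleGeneralizedPetersen.

Section NonEmptyDoubleGeneralizedPetersen.

Variables m k : nat.
Local Notation n := m.+1.

Lemma dgp_adj_invariant_const (T : Type) (h : dgp_vertex n -> T) :
  odd n || ~~ odd k -> (forall x y, dgp_adj n k x y -> h x = h y) ->
  forall x y, h x = h y.
Proof.
move=> odd_cycle h_adj.
pose u i j : dgp_vertex n := (inl (inZp i), j).
pose v i j : dgp_vertex n := (inr (inZp i), j).
have outer_step i j : h (u i j) = h (u i.+1 (~~ j)).
  by apply: h_adj; rewrite /dgp_adj /= eqxx modnDml addn1 eqxx.
have outer_walk i j : h (u i j) = h (u 0 (j (+) odd i)).
  elim: i j => [|i IHi] j; first by rewrite addbF.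
  by rewrite -[j in LHS]negbK -outer_step IHi /= addbN addNb.
have spoke i j : h (u i j) = h (v i (~~ j)) by apply: h_adj; rewrite /dgp_adj /= !eqxx.
have inner_step i j : h (v i j) = h (v (i + k) (~~ j)).
  by apply: h_adj; rewrite /dgp_adj /= eqxx modnDml eqxx.
have u0_layers : h (u 0 true) = h (u 0 false).
  case/orP: odd_cycle => [odd_n|even_k].
    have u_wrap : u n true = u 0 true.
      by rewrite /u; congr (inl _, _); apply: val_inj; rewrite /= modnn.
    by rewrite -u_wrap outer_walk odd_n.
  by rewrite spoke inner_step -spoke outer_walk /= (negbTE even_k).
have u_const i j : h (u i j) = h (u 0 false).
  by rewrite outer_walk; case: (j (+) odd i).
have vertex_const x : h x = h (u 0 false).
  case: x => [[i|i] j]; first by rewrite -(u_const i j) /u valZpK.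
  by rewrite -(u_const i (~~ j)) spoke negbK /v valZpK.
by move=> x y; rewrite !vertex_const.
Qed.

Lemma uvertex_outer_edge x : is_uvertex x -> exists y, outer_edge n x y.
Proof.
case: x => [[i|//] j] _; exists (inl (inZp i.+1), ~~ j).
by rewrite /= addn1 !eqxx.
Qed.

Lemma vvertex_inner_edge x : ~~ is_uvertex x -> exists y, inner_edge n k x y.
Proof.
case: x => [[//|i] j] _; exists (inr (inZp (i + k)), ~~ j).
by rewrite /= !eqxx.
Qed.

Variable g : {perm dgp_vertex n}.

Lemma uvertex_of_stabilizes_outer :
  stabilizes n g (outer_edge n) -> forall x, is_uvertex (g x) = is_uvertex x.
Proof. exact: stabilized_domain (@outer_edge_uvertex n) uvertex_outer_edge. Qed.

Lemma uvertex_of_stabilizes_inner :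
  stabilizes n g (inner_edge n k) -> forall x, is_uvertex (g x) = is_uvertex x.
Proof.
move=> g_inner x; apply: negb_inj; move: x.
exact: stabilized_domain (@inner_edge_vvertex n k) vvertex_inner_edge g_inner.
Qed.

End NonEmptyDoubleGeneralizedPetersen.

Unset Implicit Arguments.

Theorem lemma5p1 (n k : nat) (hk1 : 1 <= k) (hkn : 2 * k < n)
    (g : {perm dgp_vertex n}) (hg : is_dgp_aut n k g) :
  ((stabilizes n g (outer_edge n) \/ stabilizes n g (inner_edge n k) \/
    stabilizes n g (spoke_edge n)) -> stabilizes n g (spoke_edge n)) /\
  (stabilizes n g (spoke_edge n) -> (odd n \/ ~~ odd k) ->
     (stabilizes n g (outer_edge n) /\ stabilizes n g (inner_edge n k)) \/
     interchanges n g (outer_edge n) (inner_edge n k)).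
Proof.
case: n hkn g hg => [//|m] _ g g_aut.
split.
  case=> [/uvertex_of_stabilizes_outer|[/uvertex_of_stabilizes_inner|//]];
    exact: stabilizes_spoke_of_uvertex.
move=> g_spoke odd_cycle.
have odd_cycle' : odd m.+1 || ~~ odd k by case: odd_cycle => ->; rewrite ?orbT.
pose x0 : dgp_vertex m.+1 := (inl ord0, false).
pose kept x := is_uvertex (g x) == is_uvertex x.
have kept_const x : kept x = kept x0.
  exact: (dgp_adj_invariant_const odd_cycle' (uvertex_preserved_adj g_aut g_spoke)).
case: (boolP (kept x0)) => [keep | swap]; [left | right].
  apply: stabilizes_outer_inner_of_uvertex => // x.
  by apply/eqP; rewrite -/(kept x) kept_const.
apply: interchanges_outer_inner_of_uvertex => // x.
move: swap; rewrite -(kept_const x) /kept.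
by case: (is_uvertex x); case: (is_uvertex (g x)).
Qed.
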